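(* Let $c>0$, $\omega,\omega^\perp\in S^1$ with $\omega\cdot\omega^\perp=0$, $\omega(c)=\frac{1}{\sqrt{c^2+1}}\binom{c\omega}{-1}\in\mathbb{R}^3$, and $\vartheta=\binom{c(\omega+i\omega^\perp)}{-1}\in\mathbb{C}^3$. Let $p\in\mathbb{R}^3$, $\delta>0$, and $y_1,y_2,y_3\in\mathbb{R}^3$ with $y_j\cdot\omega(c)=p\cdot\omega(c)-\delta$, affinely independent together with $p$. Let $D$ be the interior of the tetrahedron with vertices $p,y_1,y_2,y_3$ and $Q$ the interior of the triangle with vertices $y_1,y_2,y_3$. With $\Delta=\{(\alpha,\beta):\alpha,\beta\ge0,\alpha+\beta\le1\}$, let $\Delta_1,\Delta_2,\Delta_3$ be the images of $\Delta$ under $(\alpha,\beta)\mapsto p+\alpha(y_1-p)+\beta(y_2-p)$, $p+\alpha(y_2-p)+\beta(y_3-p)$, $p+\alpha(y_3-p)+\beta(y_1-p)$ respectively, so that $\partial D=Q\cup\Delta_1\cup\Delta_2\cup\Delta_3$, and let $\nu_j$ be the outward unit normal of $D$ on $\Delta_j$; indices are taken modulo $3$ ($\nu_0=\nu_3$, $\nu_4=\nu_1$). Assume the labeling is such that $$(\nu_1\times\nu_3)\cdot\omega(c)<0,\quad(\nu_2\times\nu_1)\cdot\omega(c)<0,\quad(\nu_3\times\nu_2)\cdot\omega(c)<0.$$ Let $$K_D=2\delta\int_Q\frac{dS(y)}{\Big(\frac{\delta\sqrt{c^2+1}}{c}-i(y-p)\cdot\binom{\omega^\perp}{0}\Big)^{3}}.$$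 Then $$K_D\,\vartheta=c^3\sum_{j=1}^3\frac{|(\nu_j\times\nu_{j-1})\times(\nu_{j+1}\times\nu_j)|}{\big((\nu_j\times\nu_{j-1})\cdot\vartheta\big)\big((\nu_{j+1}\times\nu_j)\cdot\vartheta\big)}\,\nu_j.$$
   Context: $\times$ is the cross product in $\mathbb{R}^3$ and $\cdot$ on complex vectors is the bilinear (non-Hermitian) product. *)

From Stdlib Require Import Reals.
From Coquelicot Require Import Coquelicot.
Open Scope R_scope.

Definition R3 := (R * R * R)%type.
Definition C3 := (C * C * C)%type.

Definition v3 (a b c : R) : R3 := (a, b, c).
Definition vx (v : R3) : R := fst (fst v).
Definition vy (v : R3) : R := snd (fst v).
Definition vz (v : R3) : R := snd v.

Definition vadd (u v : R3) : R3 := v3 (vx u + vx v) (vy u + vy v) (vz u + vz v).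
Definition vsub (u v : R3) : R3 := v3 (vx u - vx v) (vy u - vy v) (vz u - vz v).
Definition vscal (k : R) (v : R3) : R3 := v3 (k * vx v) (k * vy v) (k * vz v).
Definition dot (u v : R3) : R := vx u * vx v + vy u * vy v + vz u * vz v.
Definition cross (u v : R3) : R3 :=
  v3 (vy u * vz v - vz u * vy v) (vz u * vx v - vx u * vz v) (vx u * vy v - vy u * vx v).
Definition vnorm (v : R3) : R := sqrt (dot v v).
Definition det3 (u v w : R3) : R := dot u (cross v w).

Definition cv3 (a b c : C) : C3 := (a, b, c).
Definition cvx (v : C3) : C := fst (fst v).
Definition cvy (v : C3) : C := snd (fst v).
Definition cvz (v : C3) : C := snd v.
(* bilinear (non-Hermitian) product of a real vector with a complex vector *)
Definition rcdot (u : R3) (z : C3) : C :=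
  (RtoC (vx u) * cvx z + RtoC (vy u) * cvy z + RtoC (vz u) * cvz z)%C.
Definition cscal (k : C) (z : C3) : C3 := cv3 (k * cvx z)%C (k * cvy z)%C (k * cvz z)%C.
Definition cvadd (u v : C3) : C3 := cv3 (cvx u + cvx v)%C (cvy u + cvy v)%C (cvz u + cvz v)%C.
Definition cvofR (v : R3) : C3 := cv3 (RtoC (vx v)) (RtoC (vy v)) (RtoC (vz v)).

(* Surface integral of a (continuous) complex function over the triangle with
   vertices y1 y2 y3, via the affine parametrization
   (a,b) |-> y1 + a (y2 - y1) + b (y3 - y1), (a,b) in the standard simplex,
   with surface element |(y2-y1) x (y3-y1)| da db, as an iterated Riemann integral. *)
Definition tri_param (y1 y2 y3 : R3) (a b : R) : R3 :=
  vadd y1 (vadd (vscal a (vsub y2 y1)) (vscal b (vsub y3 y1))).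
Definition triangle_surface_integral (f : R3 -> C) (y1 y2 y3 : R3) : C :=
  (RtoC (vnorm (cross (vsub y2 y1) (vsub y3 y1))) *
   @RInt C_R_CompleteNormedModule
     (fun a => @RInt C_R_CompleteNormedModule
                 (fun b => f (tri_param y1 y2 y3 a b)) 0 (1 - a)) 0 1)%C.

(* nu is the outward unit normal of the tetrahedron on the planar face with
   vertices p, a, b, whose opposite vertex is opp. *)
Definition outward_unit_normal (p a b opp nu : R3) : Prop :=
  vnorm nu = 1 /\ dot nu (vsub a p) = 0 /\ dot nu (vsub b p) = 0 /\
  dot nu (vsub opp p) < 0.

Definition omega_c (c w1 w2 : R) : R3 :=
  vscal (/ sqrt (c ^ 2 + 1)) (v3 (c * w1) (c * w2) (-1)).
Definition theta (c w1 w2 wp1 wp2 : R) : C3 :=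
  cv3 (RtoC c * (RtoC w1 + Ci * RtoC wp1))%C (RtoC c * (RtoC w2 + Ci * RtoC wp2))%C (RtoC (-1)).

(* the term of the sum for face j, with A = nu_j x nu_{j-1}, B = nu_{j+1} x nu_j *)
Definition sum_term (th : C3) (nprev nj nnext : R3) : C3 :=
  let A := cross nj nprev in
  let B := cross nnext nj in
  cscal (RtoC (vnorm (cross A B)) / (rcdot A th * rcdot B th))%C (cvofR nj).

(** The edge vectors [e_j = y_j - p] all satisfy [e_j . omega(c) = -delta], which turns
    [e_j . theta] into [-c z_j] with [z_j = delta sqrt(c^2+1)/c - i e_j . (omega_perp, 0)], a
    complex number of positive real part.  On [Q] the denominator of [K_D] is affine in the
    barycentric coordinates with vertex values [z_j], so the simplex integral of its inverse
    cube is [1 / (2 z_1 z_2 z_3)]; since delta times the area of [Q] is [|D|] with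
    [D = det(e_1, e_2, e_3)], this gives [K_D = |D| / (z_1 z_2 z_3)].
    The outward normals are [nu_j = m_j (e_j x e_(j+1))] with [m_j |e_j x e_(j+1)| = -sgn D],
    and [nu_j x nu_(j-1)] is a multiple of [e_j]; hence the j-th summand collapses to
    [-sgn D (e_j x e_(j+1)) / ((e_j . theta) (e_(j+1) . theta))], and the dual-basis identity
    [sum_j (e_j x e_(j+1)) (e_(j+2) . theta) = D theta] adds them up to
    [-|D| theta / prod_j (e_j . theta) = |D| theta / (c^3 z_1 z_2 z_3)]. *)

From Stdlib Require Import Reals Lra.
From Coquelicot Require Import Coquelicot.
Open Scope R_scope.

Lemma Re_neq_0 (z : C) : Re z <> 0 -> z <> RtoC 0.
Proof. intros H E. apply H. now rewrite E. Qed.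

Lemma RtoC_neq_0 (x : R) : x <> 0 -> RtoC x <> RtoC 0.
Proof. intros H E. apply H. exact (f_equal fst E). Qed.

Notation is_derive_C f x l := (@is_derive R_AbsRing C_R_NormedModule f x l).

Lemma is_derive_C_split (f : R -> C) (x : R) (l : C) :
  is_derive_C f x l <->
  is_derive (fun t => fst (f t)) x (fst l) /\ is_derive (fun t => snd (f t)) x (snd l).
Proof.
  split.
  - intros Hf; split; unfold is_derive in *.
    + refine (filterdiff_comp' f (fun z : C => fst z) x _ (fun z : C => fst z) Hf _).
      apply filterdiff_linear, (@is_linear_fst R_AbsRing R_NormedModule R_NormedModule).
    + refine (filterdiff_comp' f (fun z : C => snd z) x _ (fun z : C => snd z) Hf _).
      apply filterdiff_linear, (@is_linear_snd R_AbsRing R_NormedModule R_NormedModule).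
  - intros [H1 H2]. destruct l as [l1 l2].
    apply (is_derive_ext (fun t => (fst (f t), snd (f t)) : C)).
    { intros t; destruct (f t); reflexivity. }
    unfold is_derive in *.
    refine (filterdiff_comp_2 _ _ (fun a b => (a, b) : C) _ _ (fun a b => (a, b)) H1 H2 _).
    apply filterdiff_linear, is_linear_prod; [apply is_linear_fst | apply is_linear_snd].
Qed.

Lemma is_derive_eq {K : AbsRing} {V : NormedModule K} (f : K -> V) (x : K) (l l' : V) :
  is_derive f x l -> l = l' -> is_derive f x l'.
Proof. now intros H <-. Qed.

Lemma is_derive_C_const (k : C) (x : R) : is_derive_C (fun _ => k) x (RtoC 0).
Proof. exact (@is_derive_const R_AbsRing C_R_NormedModule k x). Qed.

Lemma is_derive_C_RtoC (u : R -> R) (x du : R) :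
  is_derive u x du -> is_derive_C (fun t => RtoC (u t)) x (RtoC du).
Proof.
  intros Hu. apply is_derive_C_split; split; [exact Hu|].
  exact (@is_derive_const R_AbsRing R_NormedModule 0 x).
Qed.

Lemma is_derive_C_id (x : R) : is_derive_C (fun t => RtoC t) x (RtoC 1).
Proof. apply (is_derive_C_RtoC (fun t => t)), (@is_derive_id R_AbsRing). Qed.

Lemma is_derive_C_plus (f g : R -> C) (x : R) (df dg : C) :
  is_derive_C f x df -> is_derive_C g x dg -> is_derive_C (fun t => f t + g t)%C x (df + dg)%C.
Proof. exact (is_derive_plus f g x df dg). Qed.

(* Coquelicot states real derivatives with the generic [plus]/[opp]; unfold them before [ring]. *)
Ltac R_ring :=
  match goal with |- ?a = ?b => change (@eq R a b) end; unfold minus, plus, opp; simpl; ring.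

Lemma is_derive_C_mult (f g : R -> C) (x : R) (df dg : C) :
  is_derive_C f x df -> is_derive_C g x dg ->
  is_derive_C (fun t => f t * g t)%C x (df * g x + f x * dg)%C.
Proof.
  intros [F1 F2]%is_derive_C_split [G1 G2]%is_derive_C_split.
  apply is_derive_C_split; split; simpl; eapply is_derive_eq.
  - exact (Derive.is_derive_minus _ _ _ _ _ (Derive.is_derive_mult _ _ _ _ _ F1 G1)
                                       (Derive.is_derive_mult _ _ _ _ _ F2 G2)).
  - R_ring.
  - exact (Derive.is_derive_plus _ _ _ _ _ (Derive.is_derive_mult _ _ _ _ _ F1 G2)
                                      (Derive.is_derive_mult _ _ _ _ _ F2 G1)).
  - R_ring.
Qed.

Lemma is_derive_C_inv (f : R -> C) (x : R) (df : C) :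
  is_derive_C f x df -> f x <> RtoC 0 ->
  is_derive_C (fun t => / f t)%C x (- df / (f x * f x))%C.
Proof.
  intros [F1 F2]%is_derive_C_split Hnz.
  set (N := fun t => fst (f t) ^ 2 + snd (f t) ^ 2).
  assert (HN : N x <> 0).
  { intro E. apply Hnz. unfold N in E. destruct (f x) as [a b]; simpl in *.
    assert (a = 0) by nra. assert (b = 0) by nra. now subst. }
  assert (DN : is_derive N x (2 * fst (f x) * fst df + 2 * snd (f x) * snd df)).
  { eapply is_derive_eq.
    - unfold N. apply (Derive.is_derive_plus (fun t => fst (f t) ^ 2) (fun t => snd (f t) ^ 2));
        apply is_derive_pow; eassumption.
    - R_ring. }
  apply is_derive_C_split; split; simpl; eapply is_derive_eq.
  - apply (Derive.is_derive_mult _ (fun t => / N t)); [exact F1 | apply is_derive_inv; eauto].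
  - unfold N, opp in *; simpl. destruct (f x) as [a b], df as [d e]; simpl in *.
    field. split; intro; apply HN; nra.
  - unfold Rdiv. apply (Derive.is_derive_mult (fun t => - snd (f t)) (fun t => / N t)).
    + exact (Derive.is_derive_opp _ _ _ F2).
    + apply is_derive_inv; eauto.
  - unfold N, opp in *; simpl. destruct (f x) as [a b], df as [d e]; simpl in *.
    field. split; intro; apply HN; nra.
Qed.

Lemma is_derive_C_affine (z u : C) (x : R) : is_derive_C (fun t => z + RtoC t * u)%C x u.
Proof.
  eapply is_derive_eq.
  - apply (is_derive_C_plus (fun _ => z) (fun t => RtoC t * u)%C); [apply is_derive_C_const|].
    apply (is_derive_C_mult (fun t => RtoC t) (fun _ => u));
      [apply is_derive_C_id | apply is_derive_C_const].
  - apply injective_projections; simpl; ring.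
Qed.

Lemma ex_derive_C_pow (f : R -> C) (x : R) (df : C) (n : nat) :
  is_derive_C f x df -> exists l, is_derive_C (fun t => f t ^ n)%C x l.
Proof.
  intros Hf. induction n as [|n [l IH]].
  - exists (RtoC 0). exact (is_derive_C_const (RtoC 1) x).
  - exists (df * f x ^ n + f x * l)%C. exact (is_derive_C_mult f (fun t => f t ^ n)%C x df l Hf IH).
Qed.

Lemma is_derive_C_continuous (f : R -> C) (x : R) (l : C) :
  is_derive_C f x l -> continuous f x.
Proof. intros H. apply (@ex_derive_continuous R_AbsRing C_R_NormedModule). now exists l. Qed.

Lemma is_RInt_C_derive (F f : R -> C) (a b : R) :
  (forall x, is_derive_C F x (f x)) -> (forall x, continuous f x) ->
  is_RInt (V := C_R_CompleteNormedModule) f a b (F b - F a)%C.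
Proof.
  intros HF Hf. apply (@is_RInt_derive C_R_CompleteNormedModule F f a b).
  - intros x _. apply HF.
  - intros x _. apply Hf.
Qed.

Lemma is_RInt_inv_cube_affine (Z u : C) (T : R) :
  (forall t : R, (Z + RtoC t * u)%C <> RtoC 0) ->
  is_RInt (V := C_R_CompleteNormedModule) (fun t => / (Z + RtoC t * u) ^ 3)%C 0 T
    (RtoC T * (Z + (Z + RtoC T * u))
     * / (2 * (Z * Z) * ((Z + RtoC T * u) * (Z + RtoC T * u))))%C.
Proof.
  intros Hne.
  assert (HZ : Z <> RtoC 0) by (generalize (Hne 0); now rewrite Cmult_0_l, Cplus_0_r).
  set (A := fun t : R => (Z + RtoC t * u)%C) in *.
  pose proof (is_derive_C_affine Z u) as DA.
  (* Unlike [-1 / (2 u A t ^ 2)], this antiderivative is also valid for [u = 0]. *)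
  set (H := fun t : R => (RtoC t * (Z + A t) * / (2 * (Z * Z) * (A t * A t)))%C).
  replace (RtoC T * _ * _)%C with (H T - H 0)%C.
  2:{ unfold H, A. rewrite !Cmult_0_l. apply injective_projections; simpl; ring. }
  apply is_RInt_C_derive.
  - intros x. eapply is_derive_eq.
    + apply (is_derive_C_mult (fun t => RtoC t * (Z + A t))%C
                              (fun t => / (2 * (Z * Z) * (A t * A t)))%C).
      * apply (is_derive_C_mult (fun t => RtoC t) (fun t => Z + A t)%C);
          [apply is_derive_C_id |
           apply (is_derive_C_plus (fun _ => Z)); [apply is_derive_C_const | apply DA]].
      * apply (is_derive_C_inv (fun t => 2 * (Z * Z) * (A t * A t))%C).
        -- apply (is_derive_C_mult (fun _ => 2 * (Z * Z))%C (fun t => A t * A t)%C);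
             [apply is_derive_C_const | apply (is_derive_C_mult A A); apply DA].
        -- repeat apply Cmult_neq_0; try apply Hne; try exact HZ.
           apply Re_neq_0; simpl; lra.
    + match goal with |- ?a = ?b => change (@eq C a b) end.
      unfold A; cbn [Cpow]. field. split; [apply Hne | exact HZ].
  - intros y. destruct (ex_derive_C_pow A y u 3 (DA y)) as [l Hl].
    apply (is_derive_C_continuous _ _ _
             (is_derive_C_inv (fun t => A t ^ 3)%C y l Hl (Cpow_nz _ 3 (Hne y)))).
Qed.

Definition lerp (z z' : C) (a : R) : C := (z + RtoC a * (z' - z))%C.

Lemma is_derive_C_lerp (z z' : C) (x : R) : is_derive_C (lerp z z') x (z' - z)%C.
Proof. exact (is_derive_C_affine z (z' - z) x). Qed.

Lemma is_RInt_simplex_slices (z1 z2 z3 : C) :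
  (forall a, lerp z1 z2 a <> RtoC 0) -> (forall a, lerp z3 z2 a <> RtoC 0) ->
  is_RInt (V := C_R_CompleteNormedModule)
    (fun a => RtoC (1 - a) * (lerp z1 z2 a + lerp z3 z2 a)
              * / (2 * (lerp z1 z2 a * lerp z1 z2 a) * (lerp z3 z2 a * lerp z3 z2 a)))%C
    0 1 (/ (2 * z1 * z2 * z3))%C.
Proof.
  intros Hw Hv.
  assert (Hz1 : z1 <> RtoC 0) by (generalize (Hw 0); unfold lerp; now rewrite Cmult_0_l, Cplus_0_r).
  assert (Hz3 : z3 <> RtoC 0) by (generalize (Hv 0); unfold lerp; now rewrite Cmult_0_l, Cplus_0_r).
  assert (Hz2 : z2 <> RtoC 0).
  { generalize (Hw 1); unfold lerp. now replace (z1 + RtoC 1 * (z2 - z1))%C with z2 by ring. }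
  set (w := lerp z1 z2) in *. set (v := lerp z3 z2) in *.
  set (F := fun a : R => (RtoC a * (z1 + z3 + RtoC a * (z2 - z1 - z3))
                          * / (2 * z1 * z3 * (w a * v a)))%C).
  replace (/ (2 * z1 * z2 * z3))%C with (F 1 - F 0)%C.
  2:{ unfold F, w, v, lerp. rewrite !Cmult_0_l.
      match goal with |- ?a = ?b => change (@eq C a b) end.
      replace (z1 + RtoC 1 * (z2 - z1))%C with z2 by ring.
      replace (z3 + RtoC 1 * (z2 - z3))%C with z2 by ring.
      field. repeat split; assumption. }
  apply is_RInt_C_derive.
  - intros x. eapply is_derive_eq.
    + apply (is_derive_C_mult (fun a => RtoC a * (z1 + z3 + RtoC a * (z2 - z1 - z3)))%C
                              (fun a => / (2 * z1 * z3 * (w a * v a)))%C).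
      * apply (is_derive_C_mult (fun a => RtoC a));
          [apply is_derive_C_id | apply is_derive_C_affine].
      * apply (is_derive_C_inv (fun a => 2 * z1 * z3 * (w a * v a))%C).
        -- apply (is_derive_C_mult (fun _ => 2 * z1 * z3)%C (fun a => w a * v a)%C);
             [apply is_derive_C_const | apply (is_derive_C_mult w v); apply is_derive_C_lerp].
        -- repeat apply Cmult_neq_0; try apply Hw; try apply Hv; try assumption.
           apply Re_neq_0; simpl; lra.
    + pose proof (Hw x); pose proof (Hv x). unfold w, v, lerp in *; cbv beta.
      rewrite RtoC_minus. match goal with |- ?a = ?b => change (@eq C a b) end.
      field. repeat split; assumption.
  - intros y. eapply is_derive_C_continuous.
    apply (is_derive_C_mult (fun a => RtoC (1 - a) * (w a + v a))%C
                            (fun a => / (2 * (w a * w a) * (v a * v a)))%C).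
    + apply (is_derive_C_mult (fun a => RtoC (1 - a)) (fun a => w a + v a)%C).
      * apply (is_derive_C_RtoC (fun a => 1 - a) y (-1)). auto_derive; [easy | ring].
      * apply (is_derive_C_plus w v); apply is_derive_C_lerp.
    + apply (is_derive_C_inv (fun a => 2 * (w a * w a) * (v a * v a))%C).
      * apply (is_derive_C_mult (fun a => 2 * (w a * w a))%C (fun a => v a * v a)%C).
        -- apply (is_derive_C_mult (fun _ => RtoC 2) (fun a => w a * w a)%C);
             [apply is_derive_C_const | apply (is_derive_C_mult w w); apply is_derive_C_lerp].
        -- apply (is_derive_C_mult v v); apply is_derive_C_lerp.
      * repeat apply Cmult_neq_0; try apply Hw; try apply Hv.
        apply Re_neq_0; simpl; lra.
Qed.

Lemma RInt_simplex_inv_cube (z1 z2 z3 : C) (g : R -> R -> C) :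
  (forall a b : R, (lerp z1 z2 a + RtoC b * (z3 - z1))%C <> RtoC 0) ->
  (forall a b : R, g a b = / (lerp z1 z2 a + RtoC b * (z3 - z1)) ^ 3)%C ->
  @RInt C_R_CompleteNormedModule
    (fun a => @RInt C_R_CompleteNormedModule (fun b => g a b) 0 (1 - a)) 0 1
  = (/ (2 * z1 * z2 * z3))%C.
Proof.
  intros Hne Hg.
  assert (Hend : forall a, (lerp z1 z2 a + RtoC (1 - a) * (z3 - z1))%C = lerp z3 z2 a).
  { intros a. unfold lerp. rewrite RtoC_minus. ring. }
  assert (Hw : forall a, lerp z1 z2 a <> RtoC 0).
  { intros a. generalize (Hne a 0). now rewrite Cmult_0_l, Cplus_0_r. }
  assert (Hv : forall a, lerp z3 z2 a <> RtoC 0).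
  { intros a. rewrite <- Hend. apply Hne. }
  rewrite (@RInt_ext C_R_CompleteNormedModule _
             (fun a => RtoC (1 - a) * (lerp z1 z2 a + lerp z3 z2 a)
              * / (2 * (lerp z1 z2 a * lerp z1 z2 a) * (lerp z3 z2 a * lerp z3 z2 a)))%C).
  - apply is_RInt_unique, is_RInt_simplex_slices; assumption.
  - intros a _. apply is_RInt_unique.
    eapply is_RInt_ext.
    + intros b _. symmetry. apply Hg.
    + rewrite <- Hend. apply is_RInt_inv_cube_affine, Hne.
Qed.

Ltac unfold_vec := unfold det3, dot, cross, vscal, vsub, vadd, v3, vx, vy, vz in *; simpl in *.

Lemma v3_ext (a b : R3) : vx a = vx b -> vy a = vy b -> vz a = vz b -> a = b.
Proof. destruct a as [[a1 a2] a3], b as [[b1 b2] b3]; unfold vx, vy, vz; simpl; congruence. Qed.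

Lemma dot_self_eq0 (a : R3) : dot a a = 0 -> a = v3 0 0 0.
Proof. destruct a as [[a1 a2] a3]. unfold_vec. intros H. f_equal; [f_equal|]; nra. Qed.

Lemma vnorm_scal (k : R) (a : R3) : vnorm (vscal k a) = Rabs k * vnorm a.
Proof.
  unfold vnorm.
  replace (dot (vscal k a) (vscal k a)) with (k² * dot a a) by (unfold Rsqr; unfold_vec; ring).
  rewrite sqrt_mult_alt by apply Rle_0_sqr. now rewrite sqrt_Rsqr_abs.
Qed.

Lemma det3_cycle (a b c : R3) : det3 a b c = det3 b c a.
Proof. unfold_vec. ring. Qed.

Lemma det3_cross (a b c : R3) : det3 a b c = dot c (cross a b).
Proof. unfold_vec. ring. Qed.

Lemma cross_scal (k l : R) (a b : R3) :
  cross (vscal k a) (vscal l b) = vscal (k * l) (cross a b).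
Proof. apply v3_ext; unfold_vec; ring. Qed.

Lemma orthogonal_cross_parallel (n a b : R3) :
  dot n a = 0 -> dot n b = 0 -> cross a b <> v3 0 0 0 -> exists m, n = vscal m (cross a b).
Proof.
  intros Ha Hb Hab. set (N := cross a b).
  assert (HN : dot N N <> 0) by (intros E; apply Hab, dot_self_eq0, E).
  exists (dot n N / dot N N).
  assert (Ix : vx n * dot N N - vx N * dot n N
                = dot n b * vx (cross N a) - dot n a * vx (cross N b))
    by (unfold N; unfold_vec; ring).
  assert (Iy : vy n * dot N N - vy N * dot n N
                = dot n b * vy (cross N a) - dot n a * vy (cross N b))
    by (unfold N; unfold_vec; ring).
  assert (Iz : vz n * dot N N - vz N * dot n N
                = dot n b * vz (cross N a) - dot n a * vz (cross N b))
    by (unfold N; unfold_vec; ring).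
  rewrite Ha, Hb in Ix, Iy, Iz. clearbody N.
  apply v3_ext; unfold vscal, v3, vx, vy, vz in *; simpl in *; field_simplify_eq; auto; lra.
Qed.

Lemma height_mul_area (y1 y2 y3 p W : R3) (d : R) :
  dot W W = 1 -> 0 <= d ->
  dot (vsub y1 p) W = - d -> dot (vsub y2 p) W = - d -> dot (vsub y3 p) W = - d ->
  d * vnorm (cross (vsub y2 y1) (vsub y3 y1)) = Rabs (det3 (vsub y1 p) (vsub y2 p) (vsub y3 p)).
Proof.
  intros HW Hd H1 H2 H3.
  set (u := vsub y2 y1). set (v := vsub y3 y1).
  assert (HD : det3 (vsub y1 p) (vsub y2 p) (vsub y3 p) = dot (vsub y1 p) (cross u v))
    by (unfold u, v; unfold_vec; ring).
  rewrite HD.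
  destruct (Req_dec (dot (cross u v) (cross u v)) 0) as [H0 | H0].
  { rewrite (dot_self_eq0 _ H0). unfold vnorm.
    replace (dot (v3 0 0 0) (v3 0 0 0)) with 0 by (unfold_vec; ring).
    replace (dot (vsub y1 p) (v3 0 0 0)) with 0 by (unfold_vec; ring).
    rewrite sqrt_0, Rabs_R0. ring. }
  assert (Hu : dot W u = 0) by (unfold u; unfold_vec; lra).
  assert (Hv : dot W v = 0) by (unfold v; unfold_vec; lra).
  destruct (orthogonal_cross_parallel W u v Hu Hv) as [m Hm].
  { intros E. apply H0. rewrite E. unfold_vec. ring. }
  clearbody u v. subst W.
  assert (Hmd : m * dot (vsub y1 p) (cross u v) = - d)
    by (rewrite <- H1; unfold_vec; ring).
  assert (Hmn : Rabs m * vnorm (cross u v) = 1).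
  { rewrite <- vnorm_scal. unfold vnorm. rewrite HW. apply sqrt_1. }
  rewrite <- (Rmult_1_l (Rabs (dot _ _))), <- Hmn.
  rewrite <- Rabs_pos_eq with (x := d) at 1 by exact Hd.
  rewrite <- Rabs_Ropp, <- Hmd, Rabs_mult. ring.
Qed.

Lemma unit_multiple_sign (m D : R) (v : R3) :
  vnorm (vscal m v) = 1 -> m * D < 0 -> m * vnorm v = - (D / Rabs D).
Proof.
  rewrite vnorm_scal. intros Hn HmD.
  destruct (Rlt_dec 0 D) as [HD | HD].
  - assert (m < 0) by nra. rewrite Rabs_left in Hn by lra. rewrite Rabs_pos_eq by lra.
    replace (- (D / D)) with (-1) by (field; lra). lra.
  - assert (D <> 0) by (intros ->; rewrite Rmult_0_r in HmD; lra).
    assert (D < 0) by lra. assert (0 < m) by nra.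
    rewrite Rabs_pos_eq in Hn by lra. rewrite Rabs_left by lra.
    replace (- (D / - D)) with 1 by (field; lra). lra.
Qed.

Lemma outward_unit_normal_cross (p a b o nu : R3) (D : R) :
  outward_unit_normal p a b o nu ->
  det3 (vsub a p) (vsub b p) (vsub o p) = D -> D <> 0 ->
  exists m, nu = vscal m (cross (vsub a p) (vsub b p)) /\ m * D < 0
            /\ m * vnorm (cross (vsub a p) (vsub b p)) = - (D / Rabs D).
Proof.
  intros [Hn [Ha [Hb Ho]]] HD HD0. rewrite det3_cross in HD.
  destruct (orthogonal_cross_parallel nu (vsub a p) (vsub b p) Ha Hb) as [m Hm].
  { intros E. rewrite E in HD. apply HD0. rewrite <- HD. unfold_vec. ring. }
  assert (HmD : m * D < 0) by (rewrite <- HD; subst nu; unfold_vec; nra).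
  exists m. repeat split; auto. apply unit_multiple_sign; [now rewrite <- Hm | exact HmD].
Qed.

Lemma triangle_integral_inv_cube (y1 y2 y3 p w : R3) (K : R) :
  K <> 0 ->
  triangle_surface_integral
    (fun y => / (RtoC K - Ci * RtoC (dot (vsub y p) w)) ^ 3)%C y1 y2 y3
  = (RtoC (vnorm (cross (vsub y2 y1) (vsub y3 y1)))
     * / (2 * (RtoC K - Ci * RtoC (dot (vsub y1 p) w))
            * (RtoC K - Ci * RtoC (dot (vsub y2 p) w))
            * (RtoC K - Ci * RtoC (dot (vsub y3 p) w))))%C.
Proof.
  intros HK. set (z := fun y => (RtoC K - Ci * RtoC (dot (vsub y p) w))%C).
  unfold triangle_surface_integral. f_equal. apply (RInt_simplex_inv_cube (z y1) (z y2) (z y3)).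
  - intros a b. apply Re_neq_0. replace (Re _) with K by (unfold lerp, z; simpl; ring). exact HK.
  - intros a b. do 2 f_equal.
    replace (dot (vsub (tri_param y1 y2 y3 a b) p) w) with
      (dot (vsub y1 p) w + a * (dot (vsub y2 p) w - dot (vsub y1 p) w)
       + b * (dot (vsub y3 p) w - dot (vsub y1 p) w)) by (unfold tri_param; unfold_vec; ring).
    unfold lerp, z. rewrite !RtoC_plus, !RtoC_mult, !RtoC_minus. ring.
Qed.

Lemma c3_ext (u v : C3) : cvx u = cvx v -> cvy u = cvy v -> cvz u = cvz v -> u = v.
Proof. destruct u as [[u1 u2] u3], v as [[v1 v2] v3']; unfold cvx, cvy, cvz; simpl; congruence. Qed.

Lemma cscal_cscal (k l : C) (z : C3) : cscal k (cscal l z) = cscal (k * l) z.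
Proof. apply c3_ext; cbv [cscal cvadd cv3 cvx cvy cvz fst snd]; ring. Qed.

Lemma cscal_cvadd3 (k a1 a2 a3 : C) (v1 v2 v3 : C3) :
  cscal k (cvadd (cscal a1 v1) (cvadd (cscal a2 v2) (cscal a3 v3)))
  = cvadd (cscal (k * a1) v1) (cvadd (cscal (k * a2) v2) (cscal (k * a3) v3)).
Proof. apply c3_ext; cbv [cscal cvadd cv3 cvx cvy cvz fst snd]; ring. Qed.

Lemma cvofR_scal (k : R) (v : R3) : cvofR (vscal k v) = cscal (RtoC k) (cvofR v).
Proof. apply c3_ext; unfold cvofR, vscal; simpl; apply RtoC_mult. Qed.

Lemma rcdot_scal (k : R) (e : R3) (th : C3) : rcdot (vscal k e) th = (RtoC k * rcdot e th)%C.
Proof. unfold rcdot, vscal, v3, vx, vy, vz; simpl. rewrite !RtoC_mult. ring. Qed.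

Lemma cross_dual_basis (e1 e2 e3 : R3) (th : C3) :
  cvadd (cscal (rcdot e3 th) (cvofR (cross e1 e2)))
    (cvadd (cscal (rcdot e1 th) (cvofR (cross e2 e3))) (cscal (rcdot e2 th) (cvofR (cross e3 e1))))
  = cscal (RtoC (det3 e1 e2 e3)) th.
Proof.
  destruct th as [[[a1 a2] [b1 b2]] [c1 c2]].
  apply c3_ext; unfold rcdot, cvofR, cvx, cvy, cvz; simpl; unfold_vec;
    apply injective_projections; simpl; ring.
Qed.

Lemma cross_face_normals (e1 e2 e3 : R3) (m1 m3 : R) :
  cross (vscal m1 (cross e1 e2)) (vscal m3 (cross e3 e1)) = vscal (- (m1 * m3 * det3 e1 e2 e3)) e1.
Proof. apply v3_ext; unfold_vec; ring. Qed.

Lemma sum_term_face (th : C3) (e1 e2 e3 : R3) (m1 m2 m3 D : R) :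
  det3 e1 e2 e3 = D -> m1 * D < 0 -> m2 * D < 0 -> m3 * D < 0 ->
  rcdot e1 th <> RtoC 0 -> rcdot e2 th <> RtoC 0 ->
  sum_term th (vscal m3 (cross e3 e1)) (vscal m1 (cross e1 e2)) (vscal m2 (cross e2 e3))
  = cscal (RtoC (m1 * vnorm (cross e1 e2)) / (rcdot e1 th * rcdot e2 th))%C (cvofR (cross e1 e2)).
Proof.
  intros HD H1 H2 H3 HE1 HE2.
  assert (HD' : det3 e2 e3 e1 = D) by (rewrite <- det3_cycle; exact HD).
  unfold sum_term; cbv zeta.
  rewrite (cross_face_normals e1 e2 e3 m1 m3), (cross_face_normals e2 e3 e1 m2 m1), HD, HD'.
  set (a := - (m1 * m3 * D)). set (b := - (m2 * m1 * D)).
  assert (Hm1 : m1 <> 0) by (intros ->; lra).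
  assert (Hab : 0 < a * b).
  { replace (a * b) with (m1 * m1 * ((m2 * D) * (m3 * D))) by (unfold a, b; ring).
    apply Rmult_lt_0_compat; nra. }
  assert (Ha : a <> 0) by (intros E; rewrite E in Hab; lra).
  assert (Hb : b <> 0) by (intros E; rewrite E in Hab; lra).
  rewrite cross_scal, vnorm_scal, Rabs_pos_eq, !rcdot_scal, cvofR_scal, cscal_cscal by lra.
  f_equal. rewrite !RtoC_mult.
  field. repeat split; auto using RtoC_neq_0.
Qed.

Lemma sum_faces_dual_basis (e1 e2 e3 : R3) (th : C3) (s : C) :
  rcdot e1 th <> RtoC 0 -> rcdot e2 th <> RtoC 0 -> rcdot e3 th <> RtoC 0 ->
  cvadd (cscal (s / (rcdot e1 th * rcdot e2 th)) (cvofR (cross e1 e2)))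
    (cvadd (cscal (s / (rcdot e2 th * rcdot e3 th)) (cvofR (cross e2 e3)))
       (cscal (s / (rcdot e3 th * rcdot e1 th)) (cvofR (cross e3 e1))))
  = cscal (s * RtoC (det3 e1 e2 e3) / (rcdot e1 th * rcdot e2 th * rcdot e3 th)) th.
Proof.
  intros H1 H2 H3.
  transitivity (cscal (s / (rcdot e1 th * rcdot e2 th * rcdot e3 th))
                  (cscal (RtoC (det3 e1 e2 e3)) th)).
  - rewrite <- cross_dual_basis, cscal_cvadd3.
    f_equal; [|f_equal]; f_equal; field; auto.
  - rewrite cscal_cscal. f_equal. field. auto.
Qed.

Lemma dot_vsub_l (a b w : R3) : dot (vsub a b) w = dot a w - dot b w.
Proof. unfold_vec. ring. Qed.

Lemma dot_omega_c_self (c w1 w2 : R) :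
  w1 ^ 2 + w2 ^ 2 = 1 -> dot (omega_c c w1 w2) (omega_c c w1 w2) = 1.
Proof.
  intros hw. assert (HS : 0 < c ^ 2 + 1) by nra.
  unfold omega_c.
  replace (dot _ _) with ((c ^ 2 * (w1 ^ 2 + w2 ^ 2) + 1) / (sqrt (c ^ 2 + 1) * sqrt (c ^ 2 + 1)))
    by (unfold_vec; field; apply Rgt_not_eq, sqrt_lt_R0; nra).
  rewrite sqrt_sqrt, hw by lra. field. lra.
Qed.

Lemma rcdot_theta (c w1 w2 wp1 wp2 d : R) (e : R3) :
  0 < c -> dot e (omega_c c w1 w2) = - d ->
  rcdot e (theta c w1 w2 wp1 wp2) =
  (- RtoC c * (RtoC (d * sqrt (c ^ 2 + 1) / c) - Ci * RtoC (dot e (v3 wp1 wp2 0))))%C.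
Proof.
  intros Hc H. assert (HS : 0 < sqrt (c ^ 2 + 1)) by (apply sqrt_lt_R0; nra).
  set (S := sqrt (c ^ 2 + 1)) in *.
  assert (H' : vx e * (c * w1) + vy e * (c * w2) - vz e = - d * S).
  { rewrite <- H. unfold omega_c. fold S. unfold_vec. field. lra. }
  unfold rcdot, theta, cv3, cvx, cvy, cvz, dot, v3. unfold vx, vy, vz in *.
  apply injective_projections; simpl.
  - field_simplify_eq; [nra | lra].
  - ring.
Qed.

Lemma Rdiv_abs_mul_self (D : R) : D <> 0 -> D / Rabs D * D = Rabs D.
Proof.
  intros HD. assert (Rabs D <> 0) by (apply Rabs_no_R0, HD).
  pose proof (Rsqr_abs D) as E. unfold Rsqr in E.
  replace (D / Rabs D * D) with (D * D / Rabs D) by (field; auto).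
  rewrite E. field. auto.
Qed.

Lemma tetrahedron_base_integral (p y1 y2 y3 W w : R3) (delta K : R) :
  dot W W = 1 -> 0 < delta -> K <> 0 ->
  dot (vsub y1 p) W = - delta -> dot (vsub y2 p) W = - delta -> dot (vsub y3 p) W = - delta ->
  (RtoC (2 * delta) * triangle_surface_integral
     (fun y => / (RtoC K - Ci * RtoC (dot (vsub y p) w)) ^ 3) y1 y2 y3)%C
  = (RtoC (Rabs (det3 (vsub y1 p) (vsub y2 p) (vsub y3 p)))
     / ((RtoC K - Ci * RtoC (dot (vsub y1 p) w))
        * (RtoC K - Ci * RtoC (dot (vsub y2 p) w))
        * (RtoC K - Ci * RtoC (dot (vsub y3 p) w))))%C.
Proof.
  intros HW Hd HK H1 H2 H3.
  rewrite triangle_integral_inv_cube, <- (height_mul_area y1 y2 y3 p W delta), !RtoC_mult by lra.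
  assert (Hz : forall y, (RtoC K - Ci * RtoC (dot (vsub y p) w))%C <> RtoC 0)
    by (intros y; apply Re_neq_0; simpl; lra).
  field. repeat split; apply Hz.
Qed.

Lemma tetrahedron_normals_sum (th : C3) (p y1 y2 y3 nu1 nu2 nu3 : R3) :
  let e1 := vsub y1 p in let e2 := vsub y2 p in let e3 := vsub y3 p in
  det3 e1 e2 e3 <> 0 ->
  outward_unit_normal p y1 y2 y3 nu1 -> outward_unit_normal p y2 y3 y1 nu2 ->
  outward_unit_normal p y3 y1 y2 nu3 ->
  rcdot e1 th <> RtoC 0 -> rcdot e2 th <> RtoC 0 -> rcdot e3 th <> RtoC 0 ->
  cvadd (sum_term th nu3 nu1 nu2) (cvadd (sum_term th nu1 nu2 nu3) (sum_term th nu2 nu3 nu1))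
  = cscal (RtoC (- Rabs (det3 e1 e2 e3)) / (rcdot e1 th * rcdot e2 th * rcdot e3 th))%C th.
Proof.
  intros e1 e2 e3 HD0 Hnu1 Hnu2 Hnu3 HE1 HE2 HE3.
  set (D := det3 e1 e2 e3) in *.
  assert (HD2 : det3 e2 e3 e1 = D) by (symmetry; apply det3_cycle).
  assert (HD3 : det3 e3 e1 e2 = D) by (rewrite <- det3_cycle; exact HD2).
  destruct (outward_unit_normal_cross _ _ _ _ _ D Hnu1 eq_refl HD0) as (m1 & -> & Hm1 & Hn1).
  destruct (outward_unit_normal_cross _ _ _ _ _ D Hnu2 HD2 HD0) as (m2 & -> & Hm2 & Hn2).
  destruct (outward_unit_normal_cross _ _ _ _ _ D Hnu3 HD3 HD0) as (m3 & -> & Hm3 & Hn3).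
  fold e1 e2 e3 in Hn1, Hn2, Hn3 |- *.
  rewrite (sum_term_face th e1 e2 e3 m1 m2 m3 D), (sum_term_face th e2 e3 e1 m2 m3 m1 D),
    (sum_term_face th e3 e1 e2 m3 m1 m2 D), Hn1, Hn2, Hn3, sum_faces_dual_basis; auto.
  f_equal. rewrite <- RtoC_mult, Ropp_mult_distr_l_reverse, Rdiv_abs_mul_self by exact HD0.
  reflexivity.
Qed.

Theorem proposition4p2
  (c : R) (w1 w2 wp1 wp2 : R) (p y1 y2 y3 nu1 nu2 nu3 : R3) (delta : R)
  (hc : 0 < c)
  (hw : w1 ^ 2 + w2 ^ 2 = 1) (hwp : wp1 ^ 2 + wp2 ^ 2 = 1)
  (hperp : w1 * wp1 + w2 * wp2 = 0)
  (hdelta : 0 < delta)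
  (hy1 : dot y1 (omega_c c w1 w2) = dot p (omega_c c w1 w2) - delta)
  (hy2 : dot y2 (omega_c c w1 w2) = dot p (omega_c c w1 w2) - delta)
  (hy3 : dot y3 (omega_c c w1 w2) = dot p (omega_c c w1 w2) - delta)
  (hindep : det3 (vsub y1 p) (vsub y2 p) (vsub y3 p) <> 0)
  (hnu1 : outward_unit_normal p y1 y2 y3 nu1)
  (hnu2 : outward_unit_normal p y2 y3 y1 nu2)
  (hnu3 : outward_unit_normal p y3 y1 y2 nu3)
  (hlab1 : dot (cross nu1 nu3) (omega_c c w1 w2) < 0)
  (hlab2 : dot (cross nu2 nu1) (omega_c c w1 w2) < 0)
  (hlab3 : dot (cross nu3 nu2) (omega_c c w1 w2) < 0) :
  let KD : C :=
    (RtoC (2 * delta) *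
     triangle_surface_integral
       (fun y => / (RtoC (delta * sqrt (c ^ 2 + 1) / c)
                    - Ci * RtoC (dot (vsub y p) (v3 wp1 wp2 0))) ^ 3)%C
       y1 y2 y3)%C in
  let th := theta c w1 w2 wp1 wp2 in
  cscal KD th =
  cscal (RtoC (c ^ 3))
    (cvadd (sum_term th nu3 nu1 nu2)
       (cvadd (sum_term th nu1 nu2 nu3) (sum_term th nu2 nu3 nu1))).
Proof.
  intros KD th.
  set (W := omega_c c w1 w2) in *.
  set (K := delta * sqrt (c ^ 2 + 1) / c).
  set (z := fun y => (RtoC K - Ci * RtoC (dot (vsub y p) (v3 wp1 wp2 0)))%C).
  assert (HK : 0 < K).
  { assert (0 < sqrt (c ^ 2 + 1)) by (apply sqrt_lt_R0; nra). apply Rdiv_lt_0_compat; nra. }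
  assert (Hbase : forall y, dot y W = dot p W - delta -> dot (vsub y p) W = - delta)
    by (intros y Hy; rewrite dot_vsub_l; lra).
  assert (HE : forall y, dot y W = dot p W - delta -> rcdot (vsub y p) th = (- RtoC c * z y)%C)
    by (intros y Hy; apply rcdot_theta, Hbase, Hy; exact hc).
  assert (Hz : forall y, z y <> RtoC 0) by (intros y; apply Re_neq_0; unfold z; simpl; lra).
  assert (Hc : RtoC c <> RtoC 0) by (apply RtoC_neq_0; lra).
  assert (HEnz : forall y, dot y W = dot p W - delta -> rcdot (vsub y p) th <> RtoC 0).
  { intros y Hy. rewrite (HE y Hy). apply Cmult_neq_0; [apply Re_neq_0; simpl; lra | apply Hz]. }
  rewrite (tetrahedron_normals_sum th p y1 y2 y3 nu1 nu2 nu3), cscal_cscal by auto.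
  unfold KD. fold K.
  rewrite (tetrahedron_base_integral p y1 y2 y3 W)
    by first [apply dot_omega_c_self, hw | apply Hbase; assumption | lra].
  f_equal. fold (z y1) (z y2) (z y3). rewrite (HE y1), (HE y2), (HE y3) by assumption.
  rewrite RtoC_pow, RtoC_opp. field. auto.
Qed.
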